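(* Let $m\ge 2$ and let $v_1,\dots,v_m$ be distinct values. Enforcing GAC on $\mathrm{Precedence}([v_1,\dots,v_m],[X_1,\dots,X_n])$ is strictly stronger than enforcing GAC on each of the constraints $\mathrm{Precedence}([v_i,v_j],[X_1,\dots,X_n])$ for $1\le i<j\le m$. That is: (i) for all finite domains of $X_1,\dots,X_n$, if $\mathrm{Precedence}([v_1,\dots,v_m],[X_1,\dots,X_n])$ is GAC then every $\mathrm{Precedence}([v_i,v_j],[X_1,\dots,X_n])$ with $1\le i<j\le m$ is GAC; and (ii) there exist $n$, $m$, values and domains for which every $\mathrm{Precedence}([v_i,v_j],[X_1,\dots,X_n])$ with $1\le i<j\le m$ is GAC but $\mathrm{Precedence}([v_1,\dots,v_m],[X_1,\dots,X_n])$ is not GAC.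
   Context: $X_1,\dots,X_n$ are finite domain variables, each with a finite domain $D(X_i)$. A support of a constraint is an assignment of a value from its domain to each variable that satisfies the constraint; a constraint is generalized arc consistent (GAC) iff every value in every variable's domain belongs to some support. For distinct values $a,b$, $\mathrm{Precedence}([a,b],[X_1,\dots,X_n])$ holds iff $\min\{i \mid X_i=a \text{ or } i=n+1\} < \min\{i \mid X_i=b \text{ or } i=n+2\}$ (i.e. if $b$ is taken by some $X_i$ then $a$ is taken by some $X_l$ with $l<i$). For distinct values $v_1,\dots,v_m$, $\mathrm{Precedence}([v_1,\dots,v_m],[X_1,\dots,X_n])$ holds iff $\mathrm{Precedence}([v_i,v_{i+1}],[X_1,\dots,X_n])$ holds for all $1\le i<m$ (equivalently, for all $1\le i<j\le m$). *)

From mathcomp Require Import all_boot.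
Set Implicit Arguments. Unset Strict Implicit. Unset Printing Implicit Defensive.

(* An assignment of X_1..X_n is a sequence s = [X_1; ...; X_n] (0-based here).
   min{i | X_i = a or i = n+1}  corresponds (0-based) to  index a s
   (which is size s = n when a does not occur), and
   min{i | X_i = b or i = n+2}  corresponds to  index b s  if b occurs, else n+1. *)
Definition first_or_n1 {T : eqType} (a : T) (s : seq T) : nat := index a s.
Definition first_or_n2 {T : eqType} (b : T) (s : seq T) : nat :=
  if b \in s then index b s else (size s).+1.

Definition precedence2 {T : eqType} (a b : T) (s : seq T) : Prop :=
  first_or_n1 a s < first_or_n2 b s.

Definition precedence {T : eqType} (m : nat) (v : 'I_m -> T) (s : seq T) : Prop :=
  forall i j : 'I_m, j = i.+1 :> nat -> precedence2 (v i) (v j) s.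

Definition is_support {T : eqType} (n : nat) (D : 'I_n -> seq T)
  (c : seq T -> Prop) (t : n.-tuple T) : Prop :=
  (forall j : 'I_n, tnth t j \in D j) /\ c t.

Definition GAC {T : eqType} (n : nat) (D : 'I_n -> seq T) (c : seq T -> Prop) : Prop :=
  forall (i : 'I_n) (x : T), x \in D i ->
    exists t : n.-tuple T, is_support D c t /\ tnth t i = x.

From mathcomp Require Import all_boot.

(* Proof of theorem1.
   (i) Pairwise precedence is transitive: if a precedes b and b precedes c in
   an assignment, then a precedes c.  Hence every support of the chain
   constraint Precedence([v_1,...,v_m]) is a support of each pair constraint
   Precedence([v_i,v_j]) with i < j, and GAC is monotone under weakening of
   the constraint (the same supports witness every value).
   (ii) With values 0, 1, 2 and domains D(X_1) = {0,3}, D(X_2) = {1,3},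
   D(X_3) = {1,2}, each pair constraint is GAC: this is a finite check
   against the eight assignments of the domains.  The chain is not GAC:
   if X_1 = 3 then 0 never occurs, so 1 may not occur, forcing X_2 = 3 and
   X_3 = 2, which puts 2 in the sequence without a preceding 1. *)

Lemma precedence2_trans (T : eqType) (a b c : T) (s : seq T) :
  precedence2 a b s -> precedence2 b c s -> precedence2 a c s.
Proof.
rewrite /precedence2 /first_or_n1 /first_or_n2.
case: ifP => [_|b_notin]; first exact: ltn_trans.
rewrite (memNindex (negbT b_notin)) => a_before.
case: ifP => [c_in|_ _]; last exact: leq_trans (index_size a s) _.
by rewrite ltnNge ltnW // index_mem.
Qed.

Lemma precedence_pairwise (T : eqType) (m : nat) (v : 'I_m -> T) (s : seq T) :
  precedence v s -> forall i j : 'I_m, i < j -> precedence2 (v i) (v j) s.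
Proof.
move=> chain i [j lt_jm] /=; elim: j lt_jm => [//|j IHj] lt_jm.
rewrite ltnS leq_eqVlt => /orP [/eqP eq_ij|lt_ij].
  by apply: chain; rewrite eq_ij.
have lt_jm' : j < m by apply: ltnW.
apply: (@precedence2_trans _ _ (v (Ordinal lt_jm'))); first exact: IHj.
exact: chain.
Qed.

Lemma GAC_weaken (T : eqType) (n : nat) (D : 'I_n -> seq T) (c c' : seq T -> Prop) :
  (forall s, c s -> c' s) -> GAC D c -> GAC D c'.
Proof.
move=> c_c' gac i x x_in; have [t [[t_dom t_c] t_i]] := gac i x x_in.
by exists t; split; first split; [|apply: c_c'|].
Qed.

Lemma GAC_of_candidates (T : eqType) (n : nat) (Dd : nat -> seq T)
  (c : pred (seq T)) (x0 : T) (L : seq (seq T)) :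
  (forall i : 'I_n, all (fun x => has (fun s => [&& size s == n,
      all (fun j => nth x0 s j \in Dd j) (iota 0 n), c s & nth x0 s i == x]) L)
    (Dd i)) ->
  GAC (fun i : 'I_n => Dd i) c.
Proof.
move=> cert i x x_in.
have /allP/(_ x x_in)/hasP [s _ /and4P [/eqP size_s /allP s_dom s_c /eqP s_i]]
  := cert i.
exists (Tuple (introT eqP size_s)).
split; last by rewrite (tnth_nth x0).
split=> [j|//]; rewrite (tnth_nth x0); apply: s_dom.
by rewrite mem_iota ltn_ord.
Qed.

Definition example_values (i : 'I_3) : nat := i.

Definition example_domain (k : nat) : seq nat :=
  nth [::] [:: [:: 0; 3]; [:: 1; 3]; [:: 1; 2]] k.

Definition example_domains (i : 'I_3) : seq nat := example_domain i.

Definition example_assignments : seq (seq nat) :=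
  [:: [:: 0; 1; 1]; [:: 0; 1; 2]; [:: 0; 3; 1]; [:: 0; 3; 2];
      [:: 3; 1; 1]; [:: 3; 1; 2]; [:: 3; 3; 1]; [:: 3; 3; 2]].

Lemma example_pairs_GAC (i j : 'I_3) :
  i < j -> GAC example_domains (precedence2 (example_values i) (example_values j)).
Proof.
move=> lt_ij; apply: (@GAC_of_candidates _ _ example_domain
  (fun s => first_or_n1 (example_values i) s < first_or_n2 (example_values j) s)
  0 example_assignments).
by move: lt_ij; case: i => [[|[|[|?]]] ?]; case: j => [[|[|[|?]]] ?] //= _;
  case=> [[|[|[|?]]] ?].
Qed.

Lemma example_chain_not_GAC : ~ GAC example_domains (precedence example_values).
Proof.
move=> /(_ ord0 3 isT) [t [[t_dom chain] t_0]].
pose i1 : 'I_3 := @Ordinal 3 1 isT; pose i2 : 'I_3 := @Ordinal 3 2 isT.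
have prec01 := chain ord0 i1 erefl.
have prec12 := chain i1 i2 erefl.
move: prec01 prec12 (t_dom i1) (t_dom i2) t_0; clear chain t_dom.
case: t => [[|x [|y [|z [|? ?]]]] //] size_t.
rewrite /tnth /= /example_values /example_domains /example_domain /= !inE.
rewrite /precedence2 /first_or_n1 /first_or_n2 /=.
move=> prec01 prec12 /orP [] /eqP y_val /orP [] /eqP z_val x_val;
  by move: prec01 prec12; rewrite x_val y_val z_val.
Qed.

Theorem theorem1 :
  (* (i) for arbitrary values and finite domains *)
  (forall (T : eqType) (m : nat) (v : 'I_m -> T) (n : nat) (D : 'I_n -> seq T),
     2 <= m -> injective v ->
     GAC D (precedence v) ->
     forall i j : 'I_m, i < j -> GAC D (precedence2 (v i) (v j)))
  /\
  (* (ii) a witness where all pairwise constraints are GAC but the chain is not *)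
  (exists (m : nat) (v : 'I_m -> nat) (n : nat) (D : 'I_n -> seq nat),
     2 <= m /\ injective v /\
     (forall i j : 'I_m, i < j -> GAC D (precedence2 (v i) (v j))) /\
     ~ GAC D (precedence v)).
Proof.
split.
  move=> T m v n D _ _ chain_GAC i j lt_ij.
  apply: GAC_weaken chain_GAC => s chain.
  exact: precedence_pairwise.
exists 3, example_values, 3, example_domains.
split=> //; split; first exact: val_inj.
split; [exact: example_pairs_GAC | exact: example_chain_not_GAC].
Qed.
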